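(* Let $G=(V,E)$ be a computation graph with $n=|V|$ vertices, and let $M$ be the fast-memory size. Let $J^*_G$ be the minimum number of non-trivial I/Os over all valid evaluations of $G$, let $\mathcal{O}_G$ be the set of topological evaluation orders of $G$, and for $X\in\mathcal{O}_G$ let $\mathcal{P}_X$ be the set of partitions of $V$ into parts that are each contiguous in the order $X$. Then $$J^*_G \;\geq\; \min_{X \in \mathcal{O}_G}\ \max_{P \in \mathcal{P}_X} \left( \sum_{S \in P}\ \sum_{(u,v) \in \partial S} \frac{1}{d_{out}(u)} \;-\; 2M |P| \right).$$
   Context: A computation graph is a finite directed acyclic graph $G=(V,E)$. Each vertex is an operation producing a single element, and an edge $(u,v)$ means the result of $u$ is an operand of $v$. Sources are the inputs and sinks are the outputs. Execution model: a single processor has a fast memory holding at most $M$ elements and an unbounded slow memory. Every vertex is evaluated exactly once (no recomputation), in an order that is topological with respect to $G$. To evaluate $v$, all parents of $v$ must be in fast memory; a parent not present must be read from slow memory. The eviction policy is unconstrained, but a value that is evicted while still needed by a later vertex must first be written to slow memory. Only non-trivial I/O is counted. Inputs can be placed directly into fast memory at no cost, and outputs are reported immediately at no cost when computed. However, an input that is evicted while still needed must be written to slow memory. Each transfer of one element from fast to slow memory or from slow to fast memory counts as one I/O. $d_{out}(u)$ is the out-degree of $u$ in $G$. For $S\subseteq V$, $\partial S$ is the set of edges $(u,v)\in E$ with exactly one endpoint in $S$. *)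

From HB Require Import structures.
From mathcomp Require Import all_boot all_order all_algebra.
Set Implicit Arguments. Unset Strict Implicit. Unset Printing Implicit Defensive.
Import Order.TTheory GRing.Theory Num.Theory.

Definition acyclic (T : finType) (e : rel T) : Prop :=
  forall u v, e u v -> ~~ connect e v u.

Definition dout (T : finType) (e : rel T) (u : T) : nat := #|[set v | e u v]|.

Section Exec.
Variables (T : finType) (e : rel T) (M : nat).

Inductive op := Compute of T | Read of T | Write of T | Evict of T.

Record state := St { fast : {set T}; slow : {set T}; done : {set T} }.

Definition init_state : state := St set0 set0 set0.

Definition needed (st : state) (v : T) : bool :=
  [exists w, e v w && (w \notin done st)].

Definition step (st : state) (o : op) : option state :=
  match o with
  | Compute v =>
      (* evaluate v once: all parents in fast memory, result goes to fast
         memory; sources (inputs) are placed in fast memory at no cost,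
         sinks (outputs) are reported at no cost *)
      if [&& v \notin done st, [forall u, e u v ==> (u \in fast st)]
           & #|v |: fast st| <= M]
      then Some (St (v |: fast st) (slow st) (v |: done st)) else None
  | Read v =>
      if (v \in slow st) && (#|v |: fast st| <= M)
      then Some (St (v |: fast st) (slow st) (done st)) else None
  | Write v =>
      if v \in fast st then Some (St (fast st) (v |: slow st) (done st)) else None
  | Evict v =>
      if (v \in fast st) && (needed st v ==> (v \in slow st))
      then Some (St (fast st :\ v) (slow st) (done st)) else None
  end.

Fixpoint run (st : state) (s : seq op) : option state :=
  match s with
  | [::] => Some st
  | o :: s' => match step st o with Some st' => run st' s' | None => None end
  end.

Definition valid_evaluation (s : seq op) : Prop :=
  exists st, run init_state s = Some st /\ done st = setT.

Definition io_cost (s : seq op) : nat :=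
  count (fun o => match o with Read _ | Write _ => true | _ => false end) s.

End Exec.

Definition topo_order (T : finType) (e : rel T) (X : seq T) : Prop :=
  [/\ uniq X, forall v, v \in X
    & forall u v, e u v -> index u X < index v X].

Definition contiguous_partition (T : finType) (X : seq T) (P : {set {set T}}) : Prop :=
  partition P [set: T] /\
  forall S, S \in P -> forall x y z, x \in S -> z \in S ->
    index x X <= index y X -> index y X <= index z X -> y \in S.

Local Open Scope ring_scope.

Definition part_value (T : finType) (e : rel T) (M : nat) (P : {set {set T}}) : rat :=
  \sum_(S in P) \sum_(p : T * T | e p.1 p.2 && ((p.1 \in S) != (p.2 \in S)))
      ((dout e p.1)%:R)^-1
  - 2%:R * M%:R * (#|P|)%:R.

From HB Require Import structures.
From mathcomp Require Import all_boot all_order all_algebra.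
Set Implicit Arguments. Unset Strict Implicit. Unset Printing Implicit Defensive.
Import Order.TTheory GRing.Theory Num.Theory.

(* Let X be the order in which a valid evaluation computes the vertices, and let
   S be a part of a partition that is contiguous in X.  While S is partially
   evaluated, every vertex u with an edge across the boundary of S is paid
   for: an outgoing tail u in S is still needed once S is finished, so it is
   then in fast memory or was written after its evaluation; an incoming tail u
   outside S is evaluated before S starts and is in fast memory when its child
   in S is evaluated, so it is in fast memory when S starts or is read in the
   meantime.  Hence S has at most 2M plus (number of I/Os during S) boundary
   tails, and these periods are disjoint for distinct parts.  Finally each tail
   u contributes at most d_out(u) / d_out(u) = 1 to the boundary sum. *)

Definition op_code (T : finType) (o : op T) : nat * T :=
  match o with Compute v => (0, v) | Read v => (1, v) | Write v => (2, v) | Evict v => (3, v) end.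

Definition op_decode (T : finType) (c : nat * T) : op T :=
  match c with (0, v) => Compute v | (1, v) => Read v | (2, v) => Write v | (_, v) => Evict v end.

Lemma op_codeK (T : finType) : cancel (@op_code T) (@op_decode T).
Proof. by case. Qed.

HB.instance Definition _ (T : finType) := Equality.copy (op T) (can_type (@op_codeK T)).

Section Semantics.
Variables (T : finType) (e : rel T) (M : nat).

Definition consistent (st : state T) : Prop :=
  [/\ fast st \subset done st, slow st \subset done st, #|fast st| <= M &
      {in done st, forall u, needed e st u -> (u \in fast st) || (u \in slow st)}].

Lemma consistent_init : consistent (init_state T).
Proof. by split; rewrite /= ?sub0set ?cards0 // => u; rewrite inE. Qed.

Lemma step_done st o st' : step e M st o = Some st' ->
  done st' = if o is Compute v then v |: done st else done st.
Proof. by case: o => v /=; case: ifP => // _ [<-]. Qed.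

Lemma step_fast st o st' u : step e M st o = Some st' -> u \in fast st' ->
  [\/ u \in fast st, o = Read u | o = Compute u].
Proof.
case: o => v /=; case: ifP => // _ [<-] /=; rewrite ?inE;
  by [case/predU1P => [->|]; constructor | case/andP; constructor | constructor].
Qed.

Lemma step_slow st o st' u : step e M st o = Some st' -> u \in slow st' ->
  u \in slow st \/ o = Write u.
Proof.
case: o => v /=; case: ifP => // _ [<-] /=; rewrite ?inE; try by left.
by case/predU1P => [->|]; [right | left].
Qed.

Lemma step_Compute st v st' : step e M st (Compute v) = Some st' ->
  [/\ v \notin done st, forall u, e u v -> u \in fast st & fast st' = v |: fast st].
Proof.
rewrite /=; case: ifP => // /and3P[vN /forallP parents _] [<-].
by split=> // u /(implyP (parents u)).
Qed.

Lemma step_consistent st o st' :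
  consistent st -> step e M st o = Some st' -> consistent st'.
Proof.
case=> fast_done slow_done fastM needed_kept; case: o => v /=.
- case: ifP => // /and3P[_ _ vM] [<-]; split => //=; first exact: setUS.
  + exact: subset_trans slow_done (subsetUr _ _).
  + move=> u; rewrite !inE => /predU1P[-> | uD uN]; first by rewrite eqxx.
    suff /(needed_kept u uD) : needed e st u by case/orP=> ->; rewrite orbT.
    case/existsP: uN => w /andP[uw]; rewrite inE negb_or => /andP[_ wN].
    by apply/existsP; exists w; rewrite uw.
- case: ifP => // /andP[vS vM] [<-]; split => //=.
  + by rewrite subUset sub1set (subsetP slow_done).
  + by move=> u uD /(needed_kept u uD); rewrite inE -orbA => ->; rewrite orbT.
- case: ifP => // vF [<-]; split => //=.
  + by rewrite subUset sub1set (subsetP fast_done).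
  + by move=> u uD /(needed_kept u uD); rewrite inE orbCA => ->; rewrite orbT.
- case: ifP => // /andP[vF vN] [<-]; split => //=.
  + exact: subset_trans (subD1set _ _) fast_done.
  + exact: leq_trans (subset_leq_card (subD1set _ _)) fastM.
  + move=> u uD uN; rewrite !inE; have [uv | _] /= := eqVneq u v.
      by rewrite uv in uN *; exact: implyP vN uN.
    exact: needed_kept.
Qed.

Lemma run_cat st l1 l2 st' : run e M st (l1 ++ l2) = Some st' ->
  exists2 st1, run e M st l1 = Some st1 & run e M st1 l2 = Some st'.
Proof.
elim: l1 st => [|o l1 IH] st /=; first by exists st.
by case: (step e M st o) => // st1; apply: IH.
Qed.

Lemma run_consistent st l st' :
  consistent st -> run e M st l = Some st' -> consistent st'.
Proof.
elim: l st => [|o l IH] st cst /=; first by case=> <-.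
case stepo: (step e M st o) => [st1|] //; exact/IH/(step_consistent cst stepo).
Qed.

Lemma run_done st l st' : run e M st l = Some st' ->
  done st' = done st :|: [set v : T | Compute v \in l].
Proof.
elim: l st => [|o l IH] st /=.
  by case=> <-; apply/setP => v; rewrite !inE orbF.
case stepo: (step e M st o) => [st1|] // /IH ->; rewrite (step_done stepo).
apply/setP => v; case: o {stepo} => w; rewrite !inE // orbA.
by rewrite (orbC (v == w)).
Qed.

Lemma run_fast_Read st l st' u : run e M st l = Some st' ->
  u \in done st -> u \notin fast st -> u \in fast st' -> Read u \in l.
Proof.
elim: l st => [|o l IH] st /=; first by case=> <- _ /negPf->.
case stepo: (step e M st o) => [st1|] // runl uD uF.
have uD1 : u \in done st1.
  by rewrite (step_done stepo); case: o stepo => // v; rewrite inE uD orbT.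
rewrite inE; have [uF1 | uF1] := boolP (u \in fast st1); last first.
  by move=> /(IH _ runl uD1 uF1) ->; rewrite orbT.
case: (step_fast stepo uF1) => [| -> | oC]; first by rewrite (negPf uF).
- by rewrite eqxx.
- by rewrite oC in stepo; case: (step_Compute stepo); rewrite uD.
Qed.

Lemma run_slow_Write st l st' u : run e M st l = Some st' ->
  u \notin slow st -> u \in slow st' -> Write u \in l.
Proof.
elim: l st => [|o l IH] st /=; first by case=> <- /negPf->.
case stepo: (step e M st o) => [st1|] // runl uS.
rewrite inE; have [uS1 | uS1] := boolP (u \in slow st1); last first.
  by move=> /(IH _ runl uS1) ->; rewrite orbT.
by case: (step_slow stepo uS1) => [| ->]; rewrite ?eqxx // (negPf uS).
Qed.

End Semantics.

Definition boundary_tails (T : finType) (e : rel T) (S : {set T}) : {set T} :=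
  [set u | [exists v, e u v && ((u \in S) != (v \in S))]].

Definition is_io (T : finType) (o : op T) : bool :=
  match o with Read _ | Write _ => true | _ => false end.

Definition op_vertex (T : finType) (o : op T) : T :=
  match o with Compute v | Read v | Write v | Evict v => v end.

Section Trace.
Variables (T : finType) (e : rel T) (M : nat) (s : seq (op T)) (stf : state T).
Hypotheses (run_s : run e M (init_state T) s = Some stf) (done_s : done stf = setT).

Definition state_at (k : nat) : state T :=
  odflt (init_state T) (run e M (init_state T) (take k s)).

Definition eval_time (v : T) : nat := index (Compute v) s.

Definition eval_order : seq T := sort (relpre eval_time leq) (enum T).

Definition op_at (i : 'I_(size s)) : op T := tnth (in_tuple s) i.

Lemma run_take k : run e M (init_state T) (take k s) = Some (state_at k).
Proof.
have := run_s; rewrite -{1}(cat_take_drop k s) => /run_cat[st1 run1 _].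
by rewrite /state_at run1.
Qed.

Lemma run_slice a b : a <= b ->
  run e M (state_at a) (drop a (take b s)) = Some (state_at b).
Proof.
move=> le_ab; have := run_take b; rewrite -{1}[take b s](cat_take_drop a) take_takel //.
by case/run_cat => st1; rewrite run_take => -[<-].
Qed.

Lemma state_at_consistent k : consistent e M (state_at k).
Proof. exact: run_consistent (consistent_init e M) (run_take k). Qed.

Lemma mem_eval v : Compute v \in s.
Proof. by have := run_done run_s; rewrite done_s set0U => /setP/(_ v); rewrite !inE. Qed.

Lemma done_state_at k : done (state_at k) = [set v | eval_time v < k].
Proof.
by apply/setP => v; rewrite (run_done (run_take k)) set0U !inE in_take ?mem_eval.
Qed.

Lemma step_at o : o \in s ->
  step e M (state_at (index o s)) o = Some (state_at (index o s).+1).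
Proof.
move=> os; have := run_slice (leqnSn (index o s)).
rewrite -add1n -take_drop (drop_nth o) ?index_mem // nth_index //= take0.
by case: step.
Qed.

Lemma step_eval v :
  step e M (state_at (eval_time v)) (Compute v) = Some (state_at (eval_time v).+1).
Proof. exact: step_at (mem_eval v). Qed.

Lemma eval_time_inj : injective eval_time.
Proof. by move=> v w /(index_inj (Compute v) (mem_eval v) (mem_eval w)) []. Qed.

Lemma eval_time_edge u v : e u v -> eval_time u < eval_time v.
Proof.
move=> uv; have [_ parents _] := step_Compute (step_eval v).
have [fast_done _ _ _] := state_at_consistent (eval_time v).
by have := subsetP fast_done u (parents u uv); rewrite done_state_at inE.
Qed.

Lemma eval_order_leq v w :
  (index v eval_order <= index w eval_order) = (eval_time v <= eval_time w).
Proof.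
have sorted_X : sorted (relpre eval_time leq) eval_order.
  by apply: sort_sorted => x y; exact: leq_total.
have X_all u : u \in eval_order by rewrite mem_sort mem_enum.
have le_index := sorted_leq_index (fun _ _ _ => @leq_trans _ _ _) (fun _ => leqnn _) sorted_X.
apply/idP/idP => [|le_vw]; first exact: le_index (X_all v) (X_all w).
rewrite leqNgt; apply/negP => lt_wv.
have le_wv := le_index _ _ (X_all w) (X_all v) (ltnW lt_wv).
have vw : v = w by apply/eval_time_inj/anti_leq; rewrite le_vw le_wv.
by rewrite vw ltnn in lt_wv.
Qed.

Lemma eval_order_topo : topo_order e eval_order.
Proof.
split=> [|v|u v uv]; first by rewrite sort_uniq enum_uniq.
  by rewrite mem_sort mem_enum.
by rewrite ltnNge eval_order_leq -ltnNge eval_time_edge.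
Qed.

Definition eval_convex (S : {set T}) : Prop :=
  forall x y z, x \in S -> z \in S ->
    eval_time x <= eval_time y <= eval_time z -> y \in S.

Lemma contiguous_eval_convex P S :
  contiguous_partition eval_order P -> S \in P -> eval_convex S.
Proof.
move=> [_ contig] SP x y z xS zS /andP[le_xy le_yz].
by apply: (contig S SP x y z); rewrite // eval_order_leq.
Qed.

Definition partially_evaluated (S : {set T}) (k : nat) : bool :=
  [exists x in S, eval_time x < k] && [exists z in S, k <= eval_time z].

Definition io_window (S : {set T}) : {set 'I_(size s)} :=
  [set i | is_io (op_at i) && partially_evaluated S i].

Lemma partially_evaluated_unique P S S' k : contiguous_partition eval_order P ->
  S \in P -> S' \in P -> partially_evaluated S k -> partially_evaluated S' k -> S = S'.
Proof.
move=> PX SP S'P; have /and3P[_ trivP _] := PX.1.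
have meet A B : A \in P -> B \in P -> [exists x in A, x \in B] -> A = B.
  move=> AP BP /existsP[x /andP[xA xB]]; apply/eqP; apply: contraT => neqAB.
  have := trivIsetP trivP A B AP BP neqAB.
  by move/disjointFr/(_ xA); rewrite xB.
move=> /andP[/exists_inP[x xS ltx] /exists_inP[z zS lez]].
move=> /andP[/exists_inP[x' xS' ltx'] /exists_inP[z' zS' lez']].
have [le_xx'|le_x'x] := leqP (eval_time x) (eval_time x').
  apply: (meet _ _ SP S'P); apply/exists_inP; exists x' => //.
  apply: (contiguous_eval_convex PX SP xS zS).
  by rewrite le_xx' (leq_trans (ltnW ltx') lez).
apply/esym/(meet _ _ S'P SP); apply/exists_inP; exists x => //.
apply: (contiguous_eval_convex PX S'P xS' zS').
by rewrite (ltnW le_x'x) (leq_trans (ltnW ltx) lez').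
Qed.

Lemma mem_slice a b o : o \in drop a (take b s) ->
  exists i : 'I_(size s), [/\ a <= i, i < b & op_at i = o].
Proof.
move=> /(nthP o)[j]; rewrite size_drop size_take_min ltn_subRL ltn_min.
case/andP=> lt_b lt_s; rewrite nth_drop nth_take // => sj.
by exists (Ordinal lt_s); rewrite /op_at (tnth_nth o) leq_addr.
Qed.

Lemma boundary_out_resident S u v z : eval_convex S ->
  u \in S -> v \notin S -> e u v -> z \in S -> {in S, forall y, eval_time y <= eval_time z} ->
  u \in fast (state_at (eval_time z).+1) \/
  exists2 i : 'I_(size s), partially_evaluated S i & op_at i = Write u.
Proof.
move=> convS uS vS uv zS zmax; have lt_uv := eval_time_edge uv.
have lt_zv : eval_time z < eval_time v.
  rewrite ltnNge; apply: contra vS => le_vz.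
  by apply: (convS u v z); rewrite ?(ltnW lt_uv).
have [_ _ _ kept] := state_at_consistent (eval_time z).+1.
have needed_u : needed e (state_at (eval_time z).+1) u.
  by apply/existsP; exists v; rewrite uv done_state_at inE -leqNgt.
have uD : u \in done (state_at (eval_time z).+1) by rewrite done_state_at inE ltnS zmax.
case/orP: (kept u uD needed_u) => [uF | uS1]; [by left | right].
have uS0 : u \notin slow (state_at (eval_time u)).
  have [_ slow_done_u _ _] := state_at_consistent (eval_time u).
  by apply: contra (subsetP slow_done_u u) _; rewrite done_state_at inE ltnn.
have le_uz : eval_time u <= (eval_time z).+1 by rewrite ltnW // ltnS zmax.
have [i [le_ui lt_iz opi]] := mem_slice (run_slow_Write (run_slice le_uz) uS0 uS1).
exists i => //; have lt_ui : eval_time u < i.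
  rewrite ltn_neqAle le_ui andbT; apply/eqP => ui; move: opi.
  by rewrite /op_at (tnth_nth (Compute u)) -ui nth_index ?mem_eval.
by apply/andP; split; apply/exists_inP; [exists u | exists z].
Qed.

Lemma boundary_in_resident S u v x : eval_convex S ->
  u \notin S -> v \in S -> e u v -> x \in S -> {in S, forall y, eval_time x <= eval_time y} ->
  u \in fast (state_at (eval_time x).+1) \/
  exists2 i : 'I_(size s), partially_evaluated S i & op_at i = Read u.
Proof.
move=> convS uS vS uv xS xmin; have lt_uv := eval_time_edge uv.
have lt_ux : eval_time u < eval_time x.
  rewrite ltnNge; apply: contra uS => le_xu.
  by apply: (convS x u v); rewrite ?le_xu ?(ltnW lt_uv).
have uD : u \in done (state_at (eval_time x).+1) by rewrite done_state_at inE ltnS ltnW.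
have uFv : u \in fast (state_at (eval_time v).+1).
  have [_ parents ->] := step_Compute (step_eval v).
  by rewrite inE parents ?orbT.
case uFx: (u \in fast (state_at (eval_time x).+1)); [by left | right].
have le_xv : (eval_time x).+1 <= (eval_time v).+1 by rewrite ltnS xmin.
have [i [le_xi lt_iv opi]] := mem_slice (run_fast_Read (run_slice le_xv) uD (negbT uFx) uFv).
by exists i => //; apply/andP; split; apply/exists_inP; [exists x | exists v].
Qed.

Lemma card_boundary_tails S : eval_convex S -> S != set0 ->
  #|boundary_tails e S| <= M + M + #|io_window S|.
Proof.
move=> convS /set0Pn[y yS].
have [x xS xmin] := arg_minnP eval_time yS.
have [z zS zmax] := arg_maxnP eval_time yS.
set io_vertices := [set op_vertex (op_at i) | i in io_window S].
have io_in_window (i : 'I_(size s)) : partially_evaluated S i -> is_io (op_at i) ->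
    op_vertex (op_at i) \in io_vertices.
  by move=> Si ioi; rewrite imset_f // inE ioi.
have sub_tails : boundary_tails e S \subset
    fast (state_at (eval_time x).+1) :|: fast (state_at (eval_time z).+1) :|: io_vertices.
  apply/subsetP => u; rewrite inE => /existsP[v /andP[uv]]; rewrite !inE.
  case: (boolP (u \in S)) => uS /= vS.
    have [->|[i Si opi]] := boundary_out_resident convS uS vS uv zS zmax.
      by rewrite orbT.
    by have := io_in_window i Si; rewrite opi => ->; rewrite ?orbT.
  have [->|[i Si opi]] := boundary_in_resident convS uS (negbNE vS) uv xS xmin => //.
  by have := io_in_window i Si; rewrite opi => ->; rewrite ?orbT.
have [_ _ fastx _] := state_at_consistent (eval_time x).+1.
have [_ _ fastz _] := state_at_consistent (eval_time z).+1.
apply: leq_trans (subset_leq_card sub_tails) _.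
apply: leq_trans (leq_card_setU _ _) _; rewrite leq_add ?leq_imset_card //.
by apply: leq_trans (leq_card_setU _ _) _; rewrite leq_add.
Qed.

Lemma sum_card_io_window P : contiguous_partition eval_order P ->
  \sum_(S in P) #|io_window S| <= io_cost s.
Proof.
move=> PX; have -> : io_cost s = \sum_(i < size s | is_io (op_at i)) 1.
  by rewrite /io_cost -sum1_count big_tnth.
rewrite (eq_bigr (fun S => \sum_(i | is_io (op_at i) && partially_evaluated S i) 1));
  last by move=> S _; rewrite -sum1_card; apply: eq_bigl => i; rewrite inE.
rewrite (exchange_big_dep (fun i => is_io (op_at i))) /=; last by move=> S i _ /andP[].
apply: leq_sum => i ioi; rewrite sum1dep_card.
apply/card_le1_eqP => S S'; rewrite !inE => /and3P[SP _ SI] /and3P[S'P _ S'I].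
by rewrite (partially_evaluated_unique PX SP S'P SI S'I).
Qed.

Lemma sum_card_boundary_tails P : contiguous_partition eval_order P ->
  \sum_(S in P) #|boundary_tails e S| <= (M + M) * #|P| + io_cost s.
Proof.
move=> PX; rewrite mulnC -sum_nat_const.
apply: leq_trans (leq_add (leqnn _) (sum_card_io_window PX)).
rewrite -big_split leq_sum //= => S SP.
apply: card_boundary_tails; first exact: contiguous_eval_convex PX SP.
by apply: contraTneq SP => ->; case/and3P: PX.1.
Qed.

End Trace.

Local Open Scope ring_scope.

Lemma sum_inv_dout_le1 (R : numFieldType) (T : finType) (e : rel T) u (P : pred T) :
  \sum_(v | e u v && P v) ((dout e u)%:R)^-1 <= 1 :> R.
Proof.
rewrite (eq_bigl (fun v => v \in [set v | e u v && P v])) => [|v]; last by rewrite inE.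
rewrite sumr_const; have le_card : (#|[set v | e u v && P v]| <= dout e u)%N.
  by apply/subset_leq_card/subsetP => v; rewrite !inE => /andP[].
have [dout0 | dout_gt0] := posnP (dout e u).
  by move: le_card; rewrite dout0 leqn0 => /eqP->; rewrite mulr0n ler01.
have inv_ge0 : 0 <= ((dout e u)%:R)^-1 :> R by rewrite invr_ge0 ler0n.
apply: le_trans (ler_wpMn2l inv_ge0 le_card) _.
by rewrite -[_ *+ dout e u]mulr_natr mulVf // pnatr_eq0 -lt0n.
Qed.

Lemma sum_inv_dout_boundary_le (R : numFieldType) (T : finType) (e : rel T) (S : {set T}) :
  \sum_(p : T * T | e p.1 p.2 && ((p.1 \in S) != (p.2 \in S))) ((dout e p.1)%:R)^-1
    <= #|boundary_tails e S|%:R :> R.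
Proof.
rewrite -(pair_big_dep xpredT (fun u v => e u v && ((u \in S) != (v \in S)))
                       (fun u _ => ((dout e u)%:R)^-1)) /=.
rewrite -sum1_card natr_sum [X in _ <= X]big_mkcond /=.
apply: ler_sum => u _; case: ifP => [_ | tail_u]; first exact: sum_inv_dout_le1.
rewrite big_pred0 // => v; apply/negbTE; apply: contraFN tail_u => cross_uv.
by rewrite inE; apply/existsP; exists v.
Qed.

Theorem theorem4p2 (T : finType) (e : rel T) (M : nat) :
  acyclic e ->
  forall s : seq (op T), valid_evaluation e M s ->
  exists X : seq T, topo_order e X /\
    forall P : {set {set T}}, contiguous_partition X P ->
      part_value e M P <= (io_cost s)%:R.
Proof.
move=> _ s [stf [run_s done_s]].
exists (eval_order s); split=> [|P PX]; first exact: eval_order_topo run_s done_s.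
have := sum_card_boundary_tails run_s done_s PX; rewrite addnn -mul2n addnC -(ler_nat rat).
rewrite /part_value lerBlDr natrD !natrM natr_sum; apply: le_trans.
by apply: ler_sum => S _; apply: sum_inv_dout_boundary_le.
Qed.
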